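(* For every partition $\lambda$, the dual equivalence graph $\mathsf{DE}(\lambda)$ is a subgraph of the crystal skeleton $\mathsf{CS}(\lambda)$, when edge labels and edge directions are disregarded.
   Context: French notation for tableaux; $|\lambda|=N$; $\mathsf{SYT}(\lambda)$ = standard Young tableaux of shape $\lambda$; $\mathsf{SSYT}(\lambda)_n$ = semistandard tableaux with entries in $[n]$. The reading word $\mathsf{row}(b)$ reads rows left to right from the top row down to the bottom row. The standardization $\mathsf{std}(b)$ replaces the $a_j$ entries equal to $j$, in reading order, by $a_1+\dots+a_{j-1}+1,\dots,a_1+\dots+a_j$. Crystal operators on $B(\lambda)_n=\mathsf{SSYT}(\lambda)_n$: in the subword of $\mathsf{row}(b)$ of letters $i,i+1$, bracket each $i+1$ with an unbracketed $i$ to its right (parenthesis matching, $i+1$ opening); the unbracketed letters form $i^r(i+1)^s$; $f_i$ changes the rightmost unbracketed $i$ to $i+1$ ($\emptyset$ if $r=0$). Fix $n\ge N$; for $T\in\mathsf{SYT}(\lambda)$ let $Q_T=\{b:\mathsf{std}(b)=T\}$. The crystal skeleton $\mathsf{CS}(\lambda)$ is the directed graph on $\mathsf{SYT}(\lambda)$ with an edge $T\to T'$ ($T\neq T'$) whenever $f_i(b)=b'$ for some $b\in Q_T$, $b'\in Q_{T'}$, $i$. The dual equivalence graph $\mathsf{DE}(\lambda)$ has vertex set $\mathsf{SYT}(\lambda)$ and an edge between $T$ and $T'$ whenever $T'=D_i(T)$ for some $1<i<N$, where $D_i$ acts on the permutation $\mathsf{row}(T)$ as follows: if the letters $i-1,i,i+1$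 occur in the relative order $i,\,i+1,\,i-1$ it swaps them to the order $i-1,\,i+1,\,i$ (and conversely), and if they occur in the order $i,\,i-1,\,i+1$ it swaps to $i+1,\,i-1,\,i$ (and conversely), i.e. $D_i$ interchanges $i$ with whichever of $i\pm1$ is farther from it in position-order as listed; $D_i$ is undefined for the other relative orders. (Explicitly: $\ldots i\ldots i{+}1\ldots i{-}1\ldots \leftrightarrow \ldots i{-}1\ldots i{+}1\ldots i\ldots$ and $\ldots i\ldots i{-}1\ldots i{+}1\ldots\leftrightarrow\ldots i{+}1\ldots i{-}1\ldots i\ldots$.) This preserves descents, so it defines an operation on standard tableaux via reading words. *)

From mathcomp Require Import all_boot.
Set Implicit Arguments. Unset Strict Implicit. Unset Printing Implicit Defensive.

(* Tableaux in French notation: a tableau is the list of its rows, row 0 being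
   the bottom (longest) row; row r+1 sits on top of row r. *)
Definition tableau := seq (seq nat).

Definition shape (t : tableau) : seq nat := map size t.

Definition is_partition (lam : seq nat) : bool :=
  sorted geq lam && all (fun k => 0 < k) lam.

Definition is_SSYT (n : nat) (lam : seq nat) (t : tableau) : Prop :=
  [/\ shape t = lam,
      all (fun r => all (fun x => (0 < x) && (x <= n)) r) t,
      all (sorted leq) t &
      forall r j, j < size (nth [::] t r.+1) ->
        nth 0 (nth [::] t r) j < nth 0 (nth [::] t r.+1) j].

Definition rowword (t : tableau) : seq nat := flatten (rev t).

Definition fill (lam : seq nat) (w : seq nat) : tableau :=
  rev (reshape (rev lam) w).

Definition is_SYT (lam : seq nat) (T : tableau) : Prop :=
  is_SSYT (sumn lam) lam T /\ perm_eq (rowword T) (iota 1 (sumn lam)).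

(* standardization of a word: the j's, read in order, receive the values
   a_1+..+a_{j-1}+1, ..., a_1+..+a_j *)
Definition std_word (w : seq nat) : seq nat :=
  mkseq (fun p => (count (fun x => x < nth 0 w p) w
                   + count (pred1 (nth 0 w p)) (take p w)).+1) (size w).

Definition std (b : tableau) : tableau := fill (shape b) (std_word (rowword b)).

(* position of the rightmost unbracketed i in w (bracketing each i+1 with an
   unbracketed i to its right); k = current position, op = number of
   currently unbracketed i+1's *)
Fixpoint fpos (i : nat) (w : seq nat) (k op : nat) (best : option nat)
  : option nat :=
  match w with
  | [::] => best
  | a :: w' =>
      if a == i.+1 then fpos i w' k.+1 op.+1 best
      else if a == i then
        (if op is op'.+1 then fpos i w' k.+1 op' best
         else fpos i w' k.+1 0 (Some k))
      else fpos i w' k.+1 op best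
  end.

Definition f_word (i : nat) (w : seq nat) : option (seq nat) :=
  if fpos i w 0 0 None is Some p then Some (set_nth 0 w p i.+1) else None.

(* crystal operator f_i on tableaux (None plays the role of the empty set) *)
Definition f_op (i : nat) (b : tableau) : option tableau :=
  omap (fill (shape b)) (f_word i (rowword b)).

Definition CS_edge (n : nat) (lam : seq nat) (T T' : tableau) : Prop :=
  T <> T' /\
  exists i b b', [/\ 1 <= i < n, is_SSYT n lam b, is_SSYT n lam b' &
                     [/\ std b = T, std b' = T' & f_op i b = Some b']].

Definition swapv (a b : nat) (w : seq nat) : seq nat :=
  map (fun x => if x == a then b else if x == b then a else x) w.

Definition D_word (i : nat) (w : seq nat) : option (seq nat) :=
  let pm := index i.-1 w in let p := index i w in let pp := index i.+1 w in
  if ((p < pp) && (pp < pm)) || ((pm < pp) && (pp < p)) then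
    Some (swapv i i.-1 w)
  else if ((p < pm) && (pm < pp)) || ((pp < pm) && (pm < p)) then
    Some (swapv i i.+1 w)
  else None.

Definition D_tab (i : nat) (T : tableau) : option tableau :=
  omap (fill (shape T)) (D_word i (rowword T)).

Definition DE_edge (lam : seq nat) (T T' : tableau) : Prop :=
  exists i, 1 < i < sumn lam /\ D_tab i T = Some T'.

(** The edges of DE(lambda) come from D_{k+1}, which acts on a reading word in
    which k, k+1, k+2 appear in one of four orders: either k+2 lies between k and
    k+1 and D swaps k with k+1, or k lies between k+1 and k+2 and D swaps k+1
    with k+2.  Up to orienting the edge, the two tableaux T -> S have reading
    words [..k..k+2..k+1..] -> [..k+1..k+2..k..] or
    [..k+2..k..k+1..] -> [..k+1..k..k+2..].  Collapsing k+1 onto k in T and k+2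
    onto k+1 in S gives semistandard tableaux b, b' with std b = T and
    std b' = S (the merged values occur in increasing reading order), and the
    letters k, k+1 of their reading words read k (k+1) k and (k+1) k k
    respectively, so f_k b = b'. *)

From Pilot Require Import Defs.
From mathcomp Require Import all_boot zify.
Set Implicit Arguments. Unset Strict Implicit. Unset Printing Implicit Defensive.

Lemma rowword_map f (T : tableau) : rowword (map (map f) T) = map f (rowword T).
Proof. by rewrite /rowword -map_rev map_flatten. Qed.

Lemma shape_map f (T : tableau) : Defs.shape (map (map f) T) = Defs.shape T.
Proof. by rewrite /Defs.shape -map_comp; apply: eq_map => r /=; rewrite size_map. Qed.

Lemma fill_rowword (T : tableau) : fill (Defs.shape T) (rowword T) = T.
Proof. by rewrite /fill /Defs.shape /rowword -map_rev (flattenK (rev T)) revK. Qed.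

Lemma rowword_fill lam w : size w = sumn lam -> rowword (fill lam w) = w.
Proof. by move=> h; rewrite /rowword /fill revK reshapeKr // h sumn_rev. Qed.

Lemma nth_map_default (A B : Type) (f : A -> B) x0 s i :
  nth (f x0) (map f s) i = f (nth x0 s i).
Proof.
have [lt_is|le_si] := ltnP i (size s); first by rewrite (nth_map x0).
by rewrite !nth_default ?size_map.
Qed.

Lemma index_cat_lt (T : eqType) (s1 s2 : seq T) x y :
  uniq (s1 ++ s2) -> x \in s1 -> y \in s2 -> index x (s1 ++ s2) < index y (s1 ++ s2).
Proof.
rewrite cat_uniq => /and3P [_ /hasPn dis _] xs1 ys2.
have ys1 : y \notin s1 := dis y ys2.
by rewrite !index_cat xs1 (negbTE ys1) ltn_addr ?index_mem.
Qed.

Lemma index_rowword_above (T : tableau) r c : uniq (rowword T) ->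
  c < size (nth [::] T r.+1) -> c < size (nth [::] T r) ->
  index (nth 0 (nth [::] T r.+1) c) (rowword T) < index (nth 0 (nth [::] T r) c) (rowword T).
Proof.
move=> uw ltc1 ltc0.
have ltr : r.+1 < size T by rewrite ltnNge; apply: contraL ltc1 => /(nth_default [::]) ->.
have rowsE : rowword T = (flatten (rev (drop r.+2 T)) ++ nth [::] T r.+1) ++
                      (nth [::] T r ++ flatten (rev (take r T))).
  rewrite /rowword -{1}(cat_take_drop r T) (drop_nth [::]) ?(ltnW ltr) //.
  rewrite (drop_nth [::] ltr) rev_cat !rev_cons -!cats1 !flatten_cat /=.
  by rewrite !cats0 !catA.
rewrite rowsE in uw *; apply: index_cat_lt uw _ _.
  by rewrite mem_cat mem_nth ?orbT.
by rewrite mem_cat mem_nth.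
Qed.

Definition collapse (j x : nat) : nat := if x <= j then x else x.-1.

Lemma collapse_le j x : x <= j -> collapse j x = x.
Proof. by rewrite /collapse => ->. Qed.

Lemma collapse_gt j x : j < x -> collapse j x = x.-1.
Proof. by rewrite /collapse => /ltn_geF ->. Qed.

Lemma collapse_mono j : {homo collapse j : x y / x <= y}.
Proof. by move=> x y; rewrite /collapse; case: (leqP x j); case: (leqP y j); lia. Qed.

Lemma collapse_eq j x y : (collapse j y == collapse j x) =
    [|| y == x, (x == j.+1) && (y == j) | (x == j) && (y == j.+1)].
Proof. by rewrite /collapse; case: (leqP x j); case: (leqP y j); lia. Qed.

Lemma collapse_lt j x y :
  (collapse j y < collapse j x) = (y < (if x == j.+1 then j else x)).
Proof. by rewrite /collapse; case: eqP; case: (leqP x j); case: (leqP y j); lia. Qed.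

Lemma count_lt_iota m a k : count (fun y => y < m) (iota a k) = minn (m - a) k.
Proof. by elim: k a => [|k IH] a /=; [rewrite minn0 | rewrite IH; lia]. Qed.

Lemma std_word_collapse N j w : perm_eq w (iota 1 N) ->
  index j w < index j.+1 w -> std_word (map (collapse j) w) = w.
Proof.
move=> pw jj1.
have uw : uniq w by rewrite (perm_uniq pw) iota_uniq.
have memw x : (x \in w) = (0 < x <= N) by rewrite (perm_mem pw) mem_iota; lia.
have jw : j \in w by rewrite -index_mem (leq_trans jj1) ?index_size.
have j1_notin : j.+1 \notin take (index j w) w.
  have [j1w|] := boolP (j.+1 \in w); last exact/contra/mem_take.
  by rewrite in_take // -leqNgt ltnW.
have j_before : j \in take (index j.+1 w) w by rewrite in_take.
apply: (@eq_from_nth _ 0); rewrite size_mkseq size_map // => p ltpw.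
rewrite nth_mkseq ?size_map // (nth_map 0) // count_map -map_take count_map.
have xw := mem_nth 0 ltpw; have := index_uniq 0 ltpw uw.
move: (nth 0 w p) xw => x xw px; subst p.
have xt : x \notin take (index x w) w by rewrite in_take // ltnn.
rewrite (eq_count (collapse_lt j x)) (permP pw) count_lt_iota.
(* Of the letters read before [x], only [j], and only when [x = j.+1], collapses
   to the value of [x]. *)
rewrite (@eq_in_count _ _ (fun y => (x == j.+1) && (y == j))); last first.
  move=> y yt /=; rewrite collapse_eq.
  rewrite (negbTE (memPn xt y yt)).
  have [xj|_] := eqVneq x j; last by rewrite orbF.
  by subst j; rewrite (negbTE (memPn j1_notin y yt)) /= orbF.
have [xj1|_] := eqVneq x j.+1; last by rewrite count_pred0; move: (memw x); rewrite xw; lia.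
rewrite count_uniq_mem ?take_uniq // xj1 j_before.
by move: (memw j); rewrite jw; lia.
Qed.

Lemma std_collapse lam T j : is_SYT lam T ->
  index j (rowword T) < index j.+1 (rowword T) -> std (map (map (collapse j)) T) = T.
Proof.
move=> [_ pw] lt_j.
by rewrite /std shape_map rowword_map (std_word_collapse pw lt_j) fill_rowword.
Qed.

Lemma SSYT_collapse n lam T j : sumn lam <= n -> is_SYT lam T ->
  index j (rowword T) < index j.+1 (rowword T) ->
  is_SSYT n lam (map (map (collapse j)) T).
Proof.
move=> le_n [[shT entT rowsT colsT] pw] lt_j.
have uw : uniq (rowword T) by rewrite (perm_uniq pw) iota_uniq.
have j_pos : 0 < j.
  have : j \in rowword T by rewrite -index_mem (leq_trans lt_j) ?index_size.
  by rewrite (perm_mem pw) mem_iota => /andP [].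
split.
- by rewrite shape_map.
- rewrite all_map; apply/allP => r rT; rewrite /= all_map; apply/allP => x xr /=.
  by have := allP (allP entT r rT) x xr; rewrite /collapse; case: (leqP x j); lia.
- rewrite all_map; apply/allP => r rT /=.
  exact: homo_sorted (@collapse_mono j) _ (allP rowsT r rT).
move=> r c; rewrite -[[::]]/(map (collapse j) [::]) !nth_map_default size_map => ltc.
rewrite -[0]/(collapse j 0) !nth_map_default collapse_lt.
have := colsT r c ltc; case: eqP => // below_j1 above_lt.
suff : nth 0 (nth [::] T r) c != j by lia.
apply/negP => /eqP above_j.
have ltc0 : c < size (nth [::] T r).
  by rewrite ltnNge; apply/negP => /(nth_default 0); rewrite above_j; lia.
by have := index_rowword_above uw ltc ltc0; rewrite above_j below_j1; lia.
Qed.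

Lemma fpos_cat k X w pos op best : ~~ has (mem [:: k; k.+1]) X ->
  fpos k (X ++ w) pos op best = fpos k w (pos + size X) op best.
Proof.
elim: X pos => [|a X IH] pos /=; first by rewrite addn0.
rewrite !inE negb_or => /andP [/norP [/negbTE -> /negbTE ->] /IH ->].
by rewrite addSnnS.
Qed.

Lemma fpos_free k X pos op best : ~~ has (mem [:: k; k.+1]) X ->
  fpos k X pos op best = best.
Proof. by move=> hX; rewrite -[X]cats0 fpos_cat. Qed.

Lemma set_nth_cat (T : Type) (x0 : T) X y R z :
  set_nth x0 (X ++ y :: R) (size X) z = X ++ z :: R.
Proof. by elim: X => //= a X ->. Qed.

Section FWordThreeLetters.

Variables (k : nat) (A B C D : seq nat).
Hypotheses (hA : ~~ has (mem [:: k; k.+1]) A) (hB : ~~ has (mem [:: k; k.+1]) B).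
Hypotheses (hC : ~~ has (mem [:: k; k.+1]) C) (hD : ~~ has (mem [:: k; k.+1]) D).

Lemma f_word_first :
  f_word k (A ++ k :: B ++ k.+1 :: C ++ k :: D) =
  Some (A ++ k.+1 :: B ++ k.+1 :: C ++ k :: D).
Proof.
have kSk := ltn_eqF (ltnSn k).
rewrite /f_word !fpos_cat //= kSk eqxx !fpos_cat //= eqxx !fpos_cat //= kSk eqxx.
by rewrite fpos_free // add0n set_nth_cat.
Qed.

Lemma f_word_last :
  f_word k (A ++ k.+1 :: B ++ k :: C ++ k :: D) =
  Some (A ++ k.+1 :: B ++ k :: C ++ k.+1 :: D).
Proof.
have kSk := ltn_eqF (ltnSn k).
rewrite /f_word !fpos_cat //= eqxx !fpos_cat //= kSk eqxx !fpos_cat //= kSk eqxx.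
have catX R : (A ++ k.+1 :: B ++ k :: C) ++ R = A ++ k.+1 :: B ++ k :: C ++ R.
  by rewrite -catA /= -catA.
have sizeX : ((0 + size A).+1 + size B).+1 + size C = size (A ++ k.+1 :: B ++ k :: C).
  by rewrite !size_cat /= size_cat /=; lia.
by rewrite fpos_free // sizeX -!catX set_nth_cat.
Qed.

End FWordThreeLetters.

Definition window_free k (X : seq nat) : bool := ~~ has (mem [:: k; k.+1; k.+2]) X.

(* [w -> v] is an edge of D_{k+1}, oriented as an edge of f_k. *)
Definition window_step k (w v : seq nat) : Prop :=
  exists A B C D,
  [/\ window_free k A, window_free k B, window_free k C, window_free k D &
      (w = A ++ k :: B ++ k.+2 :: C ++ k.+1 :: D /\
       v = A ++ k.+1 :: B ++ k.+2 :: C ++ k :: D) \/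
      (w = A ++ k.+2 :: B ++ k :: C ++ k.+1 :: D /\
       v = A ++ k.+1 :: B ++ k :: C ++ k.+2 :: D)].

Lemma collapse_window_free k X :
  window_free k X -> ~~ has (mem [:: k; k.+1]) (map (collapse k) X).
Proof.
move=> /hasPn hX; apply/hasPn => _ /mapP [y /hX yk ->]; move: yk.
by rewrite !inE /collapse; case: leqP; lia.
Qed.

Lemma collapseS_window_free k X :
  window_free k X -> map (collapse k.+1) X = map (collapse k) X.
Proof.
move=> /hasPn hX; apply/eq_in_map => y /hX; rewrite !inE /collapse.
by case: (leqP y k); case: (leqP y k.+1); lia.
Qed.

Lemma f_word_collapse k w v : window_step k w v ->
  f_word k (map (collapse k) w) = Some (map (collapse k.+1) v).
Proof.
move=> [A [B [C [D [hA hB hC hD [[-> ->]|[-> ->]]]]]]];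
rewrite !(map_cat, map_cons) !collapseS_window_free //;
rewrite !(collapse_le (leqnn _), collapse_le (leqnSn _));
rewrite !(collapse_gt (ltnSn _), collapse_gt (leqnSn _)) /=.
- by apply: f_word_first; apply: collapse_window_free.
- by apply: f_word_last; apply: collapse_window_free.
Qed.

Lemma window_free_notin k X : window_free k X ->
  [/\ k \notin X, k.+1 \notin X & k.+2 \notin X].
Proof.
move=> hX; split; apply: contra hX => xX; apply/hasP;
  [exists k | exists k.+1 | exists k.+2] => //; by rewrite !inE eqxx ?orbT.
Qed.

Lemma index_cons_lt (T : eqType) (s1 s2 : seq T) x y :
  x \notin s1 -> y \notin s1 -> x != y ->
  index x (s1 ++ x :: s2) < index y (s1 ++ x :: s2).
Proof.
move=> xs1 ys1 xy; rewrite !index_cat (negbTE xs1) (negbTE ys1) /= eqxx (negbTE xy).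
by rewrite addn0 addnS ltnS leq_addr.
Qed.

Lemma window_step_index k w v : window_step k w v ->
  index k w < index k.+1 w /\ index k.+1 v < index k.+2 v.
Proof.
move=> [A [B [C [D [hA hB _ _ pat]]]]].
have [A0 A1 A2] := window_free_notin hA; have [B0 B1 _] := window_free_notin hB.
have neqS i : i != i.+1 := negbT (ltn_eqF (ltnSn i)).
have [ne0 ne1] := (neqS k, neqS k.+1).
case: pat => [[-> ->]|[-> ->]]; split; try by apply: index_cons_lt.
have catAB R : A ++ k.+2 :: B ++ R = (A ++ k.+2 :: B) ++ R by rewrite -catA.
rewrite catAB; apply: index_cons_lt => //; rewrite mem_cat inE negb_or.
  by rewrite A0 (negbTE B0) (ltn_eqF (leqnSn k.+1)).
by rewrite A1 (negbTE B1) (negbTE ne1).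
Qed.

Lemma window_step_neq k w v : window_step k w v -> w <> v.
Proof.
move=> [A [B [C [D [_ _ _ _ [[-> ->]|[-> ->]]]]]]] /(congr1 (nth 0 ^~ (size A)));
by rewrite /= !nth_cat ltnn subnn /=; lia.
Qed.

Lemma CS_edge_window_step n lam T S k : 0 < k < n -> sumn lam <= n ->
  is_SYT lam T -> is_SYT lam S -> window_step k (rowword T) (rowword S) ->
  CS_edge n lam T S.
Proof.
move=> k_range le_n sT sS step.
have [lt_T lt_S] := window_step_index step.
split; first by move=> eTS; apply: (window_step_neq step); rewrite eTS.
exists k, (map (map (collapse k)) T), (map (map (collapse k.+1)) S).
split; [lia | exact: SSYT_collapse | exact: SSYT_collapse | split].
- exact: std_collapse sT lt_T.
- exact: std_collapse sS lt_S.
have [[shT _ _ _] _] := sT; have [[shS _ _ _] _] := sS.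
rewrite /f_op rowword_map (f_word_collapse step) /= shape_map -rowword_map.
by rewrite shT -shS -(shape_map (collapse k.+1)) fill_rowword.
Qed.

Lemma mem2_index (T : eqType) (s : seq T) x y :
  y \in s -> index x s <= index y s -> mem2 s x y.
Proof.
move=> ys le_xy; rewrite /mem2 -(nth_index x ys) -(subnKC le_xy) -nth_drop.
by rewrite mem_nth // size_drop; move: ys; rewrite -index_mem; lia.
Qed.

Lemma split3_index (T : eqType) (s : seq T) a b c :
  uniq s -> c \in s -> index a s < index b s < index c s ->
  exists A B C D, s = A ++ a :: B ++ b :: C ++ c :: D.
Proof.
move=> us cs /andP [lt_ab lt_bc].
have bs : b \in s by rewrite -index_mem (ltn_trans lt_bc) ?index_mem.
have ab := mem2_index bs (ltnW lt_ab); have bc := mem2_index cs (ltnW lt_bc).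
have ne_ab : a != b by apply: contraTneq lt_ab => ->; rewrite ltnn.
have ne_bc : b != c by apply: contraTneq lt_bc => ->; rewrite ltnn.
move: us bc; case/splitP2r: ab => A R; rewrite inE eq_sym (negbTE ne_ab) /= => bR us.
move: us; rewrite cat_uniq => /and3P [_ disjA _].
have bA : b \notin A.
  by apply: contra disjA => bA; apply/hasP; exists b; rewrite // inE bR orbT.
rewrite (mem2l_cat bA) mem2_cons (negbTE ne_ab).
case/splitP2r => B R'; rewrite inE eq_sym (negbTE ne_bc) /= => /splitPr [C D].
by exists A, B, C, D.
Qed.

Lemma uniq_split3 (T : eqType) (A B C D : seq T) a b c :
  uniq (A ++ a :: B ++ b :: C ++ c :: D) = uniq ([:: a; b; c] ++ A ++ B ++ C ++ D).
Proof.
by apply/perm_uniq/permP => p; rewrite !count_cat /= !count_cat /= !count_cat /=; lia.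
Qed.

Lemma uniq_window_free k (A B C D : seq nat) a b c :
  uniq (A ++ a :: B ++ b :: C ++ c :: D) ->
  {subset [:: k; k.+1; k.+2] <= [:: a; b; c]} ->
  [/\ window_free k A, window_free k B, window_free k C & window_free k D].
Proof.
rewrite uniq_split3 cat_uniq !has_cat !negb_or => /and3P [_ /and4P [hA hB hC hD] _] sub.
have free X : ~~ has (mem [:: a; b; c]) X -> window_free k X.
  by move=> /hasPn hX; apply/hasPn => z /hX; apply: contra; apply: sub.
by split; apply: free.
Qed.

Lemma split_window k w a b c : uniq w -> c \in w -> index a w < index b w < index c w ->
  {subset [:: k; k.+1; k.+2] <= [:: a; b; c]} ->
  exists A B C D, [/\ window_free k A, window_free k B, window_free k C,
                      window_free k D & w = A ++ a :: B ++ b :: C ++ c :: D].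
Proof.
move=> uw cw lt_abc sub; have [A [B [C [D ew]]]] := split3_index uw cw lt_abc.
rewrite ew in uw; have [hA hB hC hD] := uniq_window_free uw sub.
by exists A, B, C, D.
Qed.

Lemma swapvC x y w : swapv x y w = swapv y x w.
Proof. by apply: eq_map => e; do 2!case: eqP => //; move=> -> ->. Qed.

Lemma swapv_split3 (A B C D : seq nat) x y z :
  uniq (A ++ x :: B ++ z :: C ++ y :: D) ->
  swapv x y (A ++ x :: B ++ z :: C ++ y :: D) = A ++ y :: B ++ z :: C ++ x :: D.
Proof.
rewrite uniq_split3 cat_uniq !has_cat !negb_or /= !inE.
case/and3P => /and3P [/norP [xz xy] zy _] /and4P [hA hB hC hD] _.
have swap_id X : ~~ has (mem [:: x; z; y]) X -> swapv x y X = X.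
  move=> /hasPn hX; apply: map_id_in => e /hX; rewrite !inE.
  by case/norP => /negbTE -> /norP [_ /negbTE ->].
rewrite -[A ++ _]/(A ++ [:: x] ++ B ++ [:: z] ++ C ++ [:: y] ++ D).
rewrite /swapv !map_cat -!/(swapv x y _).
rewrite (swap_id A) ?(swap_id B) ?(swap_id C) ?(swap_id D) //=.
by rewrite eqxx (eq_sym z x) (eq_sym y x) (negbTE xz) (negbTE xy) (negbTE zy) eqxx.
Qed.

Lemma D_word_window_step k (w v : seq nat) :
  uniq w -> k \in w -> k.+1 \in w -> k.+2 \in w ->
  D_word k.+1 w = Some v -> window_step k w v \/ window_step k v w.
Proof.
move=> uw k0 k1 k2; rewrite /D_word /=.
case: ifP => [/orP [lt | lt] [<-] | _]; last case: ifP => [/orP [lt | lt] [<-] | //].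
- have [|A [B [C [D [hA hB hC hD ew]]]]] := split_window (k := k) uw k0 lt.
    by move=> z; rewrite !inE; lia.
  rewrite ew in uw *; right; exists A, B, C, D; split=> //; left.
  by rewrite swapv_split3.
- have [|A [B [C [D [hA hB hC hD ew]]]]] := split_window (k := k) uw k1 lt.
    by move=> z; rewrite !inE; lia.
  rewrite ew in uw *; left; exists A, B, C, D; split=> //; left.
  by rewrite swapvC swapv_split3.
- have [|A [B [C [D [hA hB hC hD ew]]]]] := split_window (k := k) uw k2 lt.
    by move=> z; rewrite !inE; lia.
  rewrite ew in uw *; right; exists A, B, C, D; split=> //; right.
  by rewrite swapv_split3.
- have [|A [B [C [D [hA hB hC hD ew]]]]] := split_window (k := k) uw k1 lt.
    by move=> z; rewrite !inE; lia.
  rewrite ew in uw *; left; exists A, B, C, D; split=> //; right.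
  by rewrite swapvC swapv_split3.
Qed.

Lemma size_D_word i w v : D_word i w = Some v -> size v = size w.
Proof.
rewrite /D_word; case: ifP => _; last case: ifP => _ //.
all: by case=> <-; rewrite size_map.
Qed.

Theorem theorem4p1 (lam : seq nat) (n : nat) :
  is_partition lam -> sumn lam <= n ->
  forall T T' : tableau, is_SYT lam T -> is_SYT lam T' ->
  DE_edge lam T T' -> CS_edge n lam T T' \/ CS_edge n lam T' T.
Proof.
move=> _ le_n T T' sT sT' [i [/andP [i_gt1 i_ltN]]].
rewrite /D_tab; case Dw: D_word => [v|] //= [eT'].
have [[shT _ _ _] pw] := sT.
have uw : uniq (rowword T) by rewrite (perm_uniq pw) iota_uniq.
have inT x : 0 < x <= sumn lam -> x \in rowword T by rewrite (perm_mem pw) mem_iota; lia.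
have rwT' : rowword T' = v.
  by rewrite -eT' shT rowword_fill // (size_D_word Dw) (perm_size pw) size_iota.
case: i i_gt1 i_ltN Dw => [|k] // k_gt0 k_lt Dw.
have k_range : 0 < k < n by lia.
have [in0 in1 in2] : [/\ k \in rowword T, k.+1 \in rowword T & k.+2 \in rowword T].
  by split; apply: inT; lia.
have [step|step] := D_word_window_step uw in0 in1 in2 Dw; [left | right].
  by apply: (CS_edge_window_step k_range); rewrite ?rwT'.
by apply: (CS_edge_window_step k_range); rewrite ?rwT'.
Qed.
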